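(* Let $r\ge 1$ and let $M=(v_1,\dots,v_n)$ be a finite list (repetitions allowed) of nonzero vectors of $\mathbb{F}_2^r$ that generate $\mathbb{F}_2^r$, and suppose $M$ is generic, i.e. $\sum_{i=1}^n v_i\neq \mathbf{0}$ in $\mathbb{F}_2^r$. Then the number of cyclic factors in the invariant factor decomposition of the Sylow-$2$ subgroup of the sandpile group $K(G(\mathbb{F}_2^r,M))$ (equivalently, $\dim_{\mathbb{F}_2} K(G(\mathbb{F}_2^r,M))\otimes \mathbb{Z}/2\mathbb{Z}$) is $2^{r-1}-1$.
   Context: The Cayley graph $G=G(\mathbb{F}_2^r,M)$ has vertex set $\mathbb{F}_2^r$; its Laplacian $L(G)$ is the $2^r\times 2^r$ integer matrix indexed by $\mathbb{F}_2^r$ with $L(G)_{u,u}=n$ and $L(G)_{u,w}=-\#\{i: u+v_i=w\}$ for $u\neq w$. Since $M$ generates, $G$ is connected and $\operatorname{coker}(L(G):\mathbb{Z}^{2^r}\to\mathbb{Z}^{2^r})\cong \mathbb{Z}\oplus K(G)$ with $K(G)$ a finite abelian group, called the sandpile group of $G$. *)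

From HB Require Import structures.
From mathcomp Require Import all_boot all_order all_algebra all_fingroup.
Set Implicit Arguments. Unset Strict Implicit. Unset Printing Implicit Defensive.
Import Order.TTheory GRing.Theory Num.Theory.
Local Open Scope ring_scope.

Notation vtx r := ('rV['F_2]_r) (only parsing).

Definition cayley_lap (r n : nat) (v : 'I_n -> 'rV['F_2]_r)
  (u w : 'rV['F_2]_r) : int :=
  if u == w then (n%:Z)%R else - (#|[set i : 'I_n | u + v i == w]|%:Z)%R.

Definition cayley_lapmx (r n : nat) (v : 'I_n -> 'rV['F_2]_r)
  : 'M[int]_#|{: 'rV['F_2]_r}| :=
  \matrix_(a, b) cayley_lap v (enum_val a) (enum_val b).

Definition generates (r n : nat) (v : 'I_n -> 'rV['F_2]_r) : bool :=
  row_full (\matrix_(i < n) v i).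

From HB Require Import structures.
From mathcomp Require Import all_boot all_order all_algebra all_fingroup.
From mathcomp Require Import zify.
Set Implicit Arguments.
Unset Strict Implicit.
Unset Printing Implicit Defensive.
Import Order.TTheory GRing.Theory Num.Theory.
Local Open Scope ring_scope.

(* Write L = P diag(d) Q for the Laplacian and N = 2^r.  Over a field F the rank
   of L is the number of d_i that are nonzero in F, so the number of even
   nonzero d_i is rank_Q L - rank_F2 L.
   Over Q, L = sum_i (1 - T_(v_i)) with T_u the translation by u.  A left kernel
   vector of L takes its maximum on a set closed under translation by the v_i,
   hence is constant since M generates, and rank_Q L = N - 1.
   Over F_2 the T_(v_i) are commuting involutions, so L^2 = 0 and rank L <= N/2.
   If the j-th coordinate of sum_i v_i is 1, then B = sum_(v_i,j = 1) T_(v_i) is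
   an involution (a sum of an odd number of commuting involutions in
   characteristic 2), and B kills every left kernel vector of L vanishing on
   {u | u_j = 1}; such a vector is therefore 0, whence dim ker L <= N/2.
   Thus rank_F2 L = N/2 and the count is N - 1 - N/2 = 2^(r-1) - 1. *)

Lemma rank_diag_mx (F : fieldType) n (d : 'rV[F]_n) :
  \rank (diag_mx d) = #|[set i | d 0 i != 0]|.
Proof.
rewrite -sum1dep_card big_mkcond /=.
elim: n d => [|n IHn] d; first by rewrite big_ord0 flatmx0 mxrank0.
pose d' : 'rV_(1 + n) := d.
rewrite -[diag_mx d]/(diag_mx d') -(hsubmxK d') diag_mx_row.
rewrite (rank_diag_block_mx (diag_mx (lsubmx d')) (diag_mx (rsubmx d'))).
rewrite IHn big_ord_recl; congr (_ + _)%N.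
  rewrite (_ : diag_mx _ = (d 0 ord0)%:M); last first.
    apply/matrixP => i j; rewrite !ord1 !mxE (_ : lshift n 0 = ord0) //.
    exact: val_inj.
  case: (eqVneq (d 0 ord0) 0) => [-> | d0]; first by rewrite raddf0 mxrank0.
  by rewrite mxrank_unit // unitmxE det_scalar1 unitfE.
apply: eq_bigr => i _; rewrite mxE (_ : rshift 1 i = lift ord0 i) //.
exact: val_inj.
Qed.

Lemma mxrank_intr_smith (F : fieldType) N (L P Q : 'M[int]_N) (d : seq int) :
  P \in unitmx -> Q \in unitmx ->
  L = P *m \matrix_(i, j) (d`_i *+ (i == j :> nat)) *m Q ->
  \rank (map_mx (intr : int -> F) L) = #|[set i : 'I_N | (d`_i)%:~R != 0 :> F]|.
Proof.
have map_unit (M : 'M[int]_N) : M \in unitmx -> map_mx (intr : int -> F) M \in unitmx.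
  by move=> uM; rewrite unitmxE det_map_mx rmorph_unit // -unitmxE.
move=> /map_unit uP /map_unit uQ ->.
rewrite !map_mxM mxrankMfree ?row_free_unit // eqmxMfull ?row_full_unit //.
rewrite (_ : map_mx _ _ = diag_mx (\row_i (d`_i)%:~R)); last first.
  by apply/matrixP => i j; rewrite !mxE rmorphMn.
by rewrite rank_diag_mx; apply: eq_card => i; rewrite !inE mxE.
Qed.

Lemma card_even_nonzero N (d : seq int) :
  #|[set i : 'I_N | (d`_i != 0) && (2 %| d`_i)%Z]| =
    (#|[set i : 'I_N | (d`_i)%:~R != 0%R :> rat]| -
     #|[set i : 'I_N | (d`_i)%:~R != 0%R :> 'F_2]|)%N.
Proof.
have odd_sub : [set i : 'I_N | (d`_i)%:~R != 0 :> 'F_2]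
                \subset [set i : 'I_N | (d`_i)%:~R != 0 :> rat].
  by apply/subsetP => i; rewrite !inE intr_eq0; apply: contraNneq => ->.
rewrite -(setIidPr odd_sub) -cardsD; apply: eq_card => i.
by rewrite !inE intr_eq0 -(dvdz_pcharf (pchar_Fp _)) // negbK andbC.
Qed.

Lemma mxrank_sqr0_le (F : fieldType) n (A : 'M[F]_n) :
  A *m A = 0 -> (2 * \rank A <= n)%N.
Proof.
move=> AA0; have := mxrank_mul_ker A A; rewrite AA0 mxrank0 add0n => rankA.
have : (\rank A <= n - \rank A)%N.
  by rewrite -{1}rankA -mxrank_ker mxrankS // capmxSr.
by have := rank_leq_row A; lia.
Qed.

Lemma sqr_sum_char2 (R : pzRingType) (I : Type) (s : seq I) (P : pred I) (F : I -> R) :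
  2%:R = 0 :> R -> (forall i j, GRing.comm (F i) (F j)) ->
  (\sum_(i <- s | P i) F i) ^+ 2 = \sum_(i <- s | P i) F i ^+ 2.
Proof.
move=> R2 commF; elim: s => [|i s IHs]; first by rewrite !big_nil expr0n.
rewrite !big_cons; case: (P i) => //.
have commFi := commr_sum s (fun j _ => commF i j).
rewrite expr2 mulrDl !mulrDr -expr2 -IHs -expr2 commFi addrA -(addrA (F i ^+ 2)).
by rewrite -mulr2n -mulr_natr R2 mulr0 addr0.
Qed.

Section Translation.

Variable V : finZmodType.
Local Notation N := #|{: V}|.

Definition transl (u : V) (a : 'I_N) : 'I_N := enum_rank (enum_val a + u).

Lemma translK u : cancel (transl u) (transl (- u)).
Proof. by move=> a; rewrite /transl enum_rankK addrK enum_valK. Qed.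

Lemma transl_inj u : injective (transl u).
Proof. exact: can_inj (translK u). Qed.

Definition transl_perm u : 'S_N := perm (@transl_inj u).

Lemma transl_permD u w : (transl_perm u * transl_perm w)%g = transl_perm (u + w).
Proof. by apply/permP => a; rewrite permM !permE /transl enum_rankK addrA. Qed.

Lemma transl_perm0 : transl_perm 0 = 1%g.
Proof. by apply/permP => a; rewrite perm1 permE /transl addr0 enum_valK. Qed.

Lemma transl_permN u : (transl_perm u)^-1%g = transl_perm (- u).
Proof. by apply/eqP; rewrite eq_invg_mul transl_permD subrr transl_perm0. Qed.

Section TranslationMatrix.

Variable R : pzRingType.

Definition transl_mx u : 'M[R]_N := perm_mx (transl_perm u).

Lemma transl_mxE u a b : transl_mx u a b = (enum_val a + u == enum_val b)%:R.
Proof.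
by rewrite /transl_mx /perm_mx !mxE permE /transl -(inj_eq enum_val_inj) enum_rankK.
Qed.

Lemma transl_mxD u w : transl_mx u *m transl_mx w = transl_mx (u + w).
Proof. by rewrite -perm_mxM transl_permD. Qed.

Lemma transl_mx0 : transl_mx 0 = 1%:M.
Proof. by rewrite /transl_mx transl_perm0 perm_mx1. Qed.

Lemma transl_mx_comm u w : GRing.comm (transl_mx u) (transl_mx w).
Proof. by rewrite /GRing.comm -!mulmxE !transl_mxD addrC. Qed.

Lemma row_mul_transl_mx (x : 'rV[R]_N) u b :
  (x *m transl_mx u) 0 b = x 0 (transl (- u) b).
Proof.
by rewrite /transl_mx -[u]opprK -transl_permN -col_permE mxE permE opprK.
Qed.

Definition lap_mx n (v : 'I_n -> V) : 'M[R]_N := \sum_i (1%:M - transl_mx (v i)).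

Lemma row_mul_lap_mx n (v : 'I_n -> V) (x : 'rV[R]_N) b :
  (x *m lap_mx v) 0 b = \sum_i (x 0 b - x 0 (transl (- v i) b)).
Proof.
rewrite mulmx_sumr summxE; apply: eq_bigr => i _.
by rewrite mulmxBr mulmx1 -row_mul_transl_mx !mxE.
Qed.

Lemma lap_mxE n (v : 'I_n -> V) a b :
  lap_mx v a b = (a == b)%:R *+ n - #|[set i | enum_val a + v i == enum_val b]|%:R.
Proof.
have entry i : (1%:M - transl_mx (v i)) a b =
               (a == b)%:R - (enum_val a + v i == enum_val b)%:R.
  by rewrite -transl_mxE !mxE.
rewrite summxE (eq_bigr _ (fun i _ => entry i)) sumrB sumr_const card_ord -natr_sum.
by rewrite -sum1dep_card [in RHS]big_mkcond.
Qed.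

End TranslationMatrix.

Section MaximumPrinciple.

Variables (R : realFieldType) (n : nat) (v : 'I_n -> V).
Hypothesis v_span : forall u : V, exists s : seq 'I_n, u = \sum_(i <- s) v i.

Lemma lap_mx_ker_const (x : 'rV[R]_N) : x *m lap_mx R v = 0 -> exists c, x = const_mx c.
Proof.
move=> xL0.
have [b0 _ x_max] := @arg_maxP _ _ _ (enum_rank (0 : V)) xpredT (x 0) isT.
set M := x 0 b0.
have maxD u i : x 0 (enum_rank u) = M -> x 0 (enum_rank (u - v i)) = M.
  move=> xu; have /rowP/(_ (enum_rank u)) := xL0; rewrite row_mul_lap_mx mxE.
  have ge0 j : true -> 0 <= x 0 (enum_rank u) - x 0 (transl (- v j) (enum_rank u)).
    by rewrite subr_ge0 xu => _; apply: x_max.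
  move=> /(psumr_eq0P ge0)/(_ i isT)/eqP.
  by rewrite subr_eq0 xu /transl enum_rankK => /eqP.
have maxB s u : x 0 (enum_rank u) = M -> x 0 (enum_rank (u - \sum_(i <- s) v i)) = M.
  elim: s u => [|i s IHs] u xu; first by rewrite big_nil subr0.
  by rewrite big_cons opprD addrA; apply/IHs/maxD.
exists M; apply/rowP => a; rewrite mxE.
have [s def_s] := v_span (enum_val b0 - enum_val a).
by rewrite -[a]enum_valK -[enum_val a](subKr (enum_val b0)) def_s maxB ?enum_valK.
Qed.

Lemma rank_lap_mx : \rank (lap_mx R v) = N.-1.
Proof.
set L := lap_mx R v; set one : 'rV[R]_N := const_mx 1.
have ker_one : (kermx L :=: one)%MS.
  apply/eqmxP/andP; split; last first.
    apply/sub_kermxP/rowP => b; rewrite row_mul_lap_mx [RHS]mxE big1 // => i _.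
    by rewrite !mxE subrr.
  apply/row_subP => k; have [c ->] := lap_mx_ker_const (sub_kermxP (row_sub k (kermx L))).
  by rewrite (_ : const_mx c = c *: one) ?scalemx_sub //; apply/rowP => a; rewrite !mxE mulr1.
have one_neq0 : one != 0.
  by apply/eqP => /rowP/(_ (enum_rank (0 : V))); rewrite !mxE; apply/eqP; rewrite oner_eq0.
have := mxrank_ker L; rewrite ker_one rank_rV one_neq0.
by have := rank_leq_row L; lia.
Qed.

End MaximumPrinciple.

End Translation.

Section ElementaryAbelian2Group.

Variable r : nat.
Local Notation V := 'rV['F_2]_r.
Local Notation N := #|{: V}|.

Lemma F2_neq0 (x : 'F_2) : x != 0 -> x = 1.
Proof. by case: x => [[|[|k]] // lt_k2] _; apply: val_inj. Qed.

Lemma oppmx_F2 m k (A : 'M['F_2]_(m, k)) : - A = A.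
Proof. by apply/matrixP => i j; rewrite mxE oppr_pchar2 // pchar_Fp. Qed.

Lemma addmx_F2 m k (A : 'M['F_2]_(m, k)) : A + A = 0.
Proof. by rewrite -{2}[A]oppmx_F2 subrr. Qed.

Lemma natr2_mx_F2 m : 2%:R = 0 :> 'M['F_2]_m.
Proof. exact: addmx_F2. Qed.

Lemma card_rV_F2 : N = (2 ^ r)%N.
Proof. by rewrite card_mx card_Fp // mul1n. Qed.

Definition coord_support (j : 'I_r) : {set V} := [set u : V | u 0 j != 0].

Lemma card_coord_support (j : 'I_r) : (2 * #|coord_support j| = 2 ^ r)%N.
Proof.
set A := coord_support j.
have flip_j : ~: A = (+%R^~ (delta_mx 0 j)) @^-1: A.
  apply/setP => u; rewrite !inE !mxE !eqxx /=.
  by case: (eqVneq (u 0 j) 0) => [-> | /F2_neq0 ->].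
rewrite -card_rV_F2 -(cardsC A) flip_j card_preimset; last exact: addIr.
by rewrite addnn mul2n.
Qed.

Lemma generates_sum_seq n (v : 'I_n -> V) :
  generates v -> forall u : V, exists s : seq 'I_n, u = \sum_(i <- s) v i.
Proof.
move=> gen_v u; have /submxP[y ->] : (u <= \matrix_(i < n) v i)%MS by apply: submx_full.
exists (enum [pred i | y 0 i != 0]); rewrite big_enum /= mulmx_sum_row.
rewrite (bigID [pred i | y 0 i != 0]) /= addrC big1 ?add0r => [|i /negPn/eqP ->].
  by apply: eq_bigr => i /F2_neq0 ->; rewrite rowK scale1r.
by rewrite scale0r.
Qed.

Lemma map_cayley_lapmx (R : pzRingType) n (v : 'I_n -> V) :
  (forall i, v i != 0) -> map_mx intr (cayley_lapmx v) = lap_mx R v.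
Proof.
move=> v_neq0; apply/matrixP => a b; rewrite !mxE lap_mxE /cayley_lap.
rewrite (inj_eq enum_val_inj); case: eqVneq => [-> | neq_ab].
  rewrite mulr1n (_ : [set i | _] = set0) ?cards0 ?subr0 //; apply/setP => i.
  by rewrite !inE -[X in _ == X]addr0 (inj_eq (addrI _)) (negbTE (v_neq0 i)).
by rewrite mul0rn sub0r rmorphN.
Qed.

Lemma transl_mx_F2_sqr (u : V) : transl_mx 'F_2 u ^+ 2 = 1.
Proof. by rewrite expr2 -mulmxE transl_mxD -{2}[u]oppmx_F2 subrr transl_mx0. Qed.

Lemma sqr_sum_transl_mx_F2 (I : Type) (s : seq I) (P : pred I) (w : I -> V) :
  (\sum_(i <- s | P i) transl_mx 'F_2 (w i)) ^+ 2 = (\sum_(i <- s | P i) 1)%:M.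
Proof.
rewrite sqr_sum_char2 ?natr2_mx_F2 // => [|i j]; last exact: transl_mx_comm.
by rewrite (eq_bigr _ (fun i _ => transl_mx_F2_sqr (w i))) raddf_sum.
Qed.

Lemma lap_mx_F2_sqr n (v : 'I_n -> V) : lap_mx 'F_2 v *m lap_mx 'F_2 v = 0.
Proof.
have commL i j : GRing.comm (1%:M - transl_mx 'F_2 (v i)) (1%:M - transl_mx 'F_2 (v j)).
  apply: commrB (commr1 _) (commr_sym (commrB (commr1 _) _)).
  exact: transl_mx_comm.
rewrite mulmxE -expr2 sqr_sum_char2 ?natr2_mx_F2 //; apply: big1 => i _.
rewrite idmxE -sqrrN opprB sqrrB1 transl_mx_F2_sqr -mulr_natr natr2_mx_F2 mulr0 subr0.
exact: natr2_mx_F2.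
Qed.

Definition coord_mx (j : 'I_r) : 'M['F_2]_N := diag_mx (\row_a (enum_val a : V) 0 j).

Lemma rank_coord_mx (j : 'I_r) : \rank (coord_mx j) = #|coord_support j|.
Proof.
rewrite rank_diag_mx -[RHS](on_card_preimset (onW_bij _ (enum_val_bij _))).
by apply: eq_card => a; rewrite !inE mxE.
Qed.

Lemma lap_mx_F2_ker_coord n (v : 'I_n -> V) (j : 'I_r) (x : 'rV['F_2]_N) :
  (\sum_i v i) 0 j != 0 -> x *m lap_mx 'F_2 v = 0 -> x *m coord_mx j = 0 -> x = 0.
Proof.
move=> sum_j xL0 xD0.
have x0 a : (enum_val a : V) 0 j != 0 -> x 0 a = 0.
  move=> /F2_neq0 a_j; have /rowP/(_ a) := xD0.
  by rewrite mul_mx_diag !mxE a_j mulr1.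
have transl_j u b : (enum_val (transl u b) : V) 0 j = (enum_val b : V) 0 j + u 0 j.
  by rewrite /transl enum_rankK mxE.
set B := \sum_(i | v i 0 j != 0) transl_mx 'F_2 (v i).
have BB : B *m B = 1%:M.
  rewrite mulmxE -expr2 sqr_sum_transl_mx_F2; congr _%:M.
  apply: (etrans _ (F2_neq0 sum_j)).
  rewrite summxE [RHS](bigID (fun i => v i 0 j != 0)) /=.
  rewrite [X in _ = _ + X]big1 ?addr0 => [|i /negPn/eqP //].
  by apply: eq_bigr => i /F2_neq0 ->.
have xB0 : x *m B = 0.
  apply/rowP => b; rewrite mulmx_sumr summxE [RHS]mxE.
  under eq_bigr do rewrite row_mul_transl_mx oppmx_F2.
  have [b_j | b_j] := eqVneq ((enum_val b : V) 0 j) 0.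
    by apply: big1 => i c_i; apply: x0; rewrite transl_j b_j add0r.
  have /rowP/(_ b) := xL0; rewrite row_mul_lap_mx mxE x0 //.
  rewrite (eq_bigr (fun i => - x 0 (transl (v i) b))) => [|i _]; last first.
    by rewrite oppmx_F2 sub0r.
  rewrite sumrN (bigID (fun i => v i 0 j != 0)) /= [X in _ + X]big1 ?addr0.
    by move/eqP; rewrite oppr_eq0 => /eqP.
  by move=> i /negPn/eqP c_i; apply: x0; rewrite transl_j c_i addr0.
by rewrite -[x]mulmx1 -BB mulmxA xB0 mul0mx.
Qed.

Lemma rank_lap_mx_F2 n (v : 'I_n -> V) :
  \sum_i v i != 0 -> (2 * \rank (lap_mx 'F_2 v) = 2 ^ r)%N.
Proof.
move=> sum_neq0; pose L := lap_mx 'F_2 v.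
have [j sum_j] : exists j, (\sum_i v i) 0 j != 0.
  apply/existsP; apply: contraR sum_neq0 => /existsPn sum0.
  by apply/eqP/rowP => j; rewrite mxE; apply/eqP/negPn/sum0.
have ker_le : (\rank (kermx L) <= \rank (coord_mx j))%N.
  rewrite -(mxrank_mul_ker (kermx L) (coord_mx j)) (_ : \rank (_ :&: _) = 0)%N ?addn0.
    exact: mxrankM_maxr.
  apply/eqP; rewrite mxrank_eq0; apply/rowV0P => y.
  rewrite sub_capmx => /andP[/sub_kermxP yL /sub_kermxP yD].
  exact: lap_mx_F2_ker_coord sum_j yL yD.
have := mxrank_sqr0_le (lap_mx_F2_sqr v); have := card_coord_support j.
rewrite mxrank_ker rank_coord_mx in ker_le; move: ker_le (rank_leq_row L).
move: (\rank L) #|coord_support j| => k c; rewrite !card_rV_F2; lia.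
Qed.

End ElementaryAbelian2Group.

Theorem mainTheorem1 (r n : nat) (v : 'I_n -> 'rV['F_2]_r) :
  (1 <= r)%N ->
  (forall i, v i != 0) ->
  generates v ->
  \sum_(i < n) v i != 0 ->
  forall (P Q : 'M[int]_#|{: 'rV['F_2]_r}|) (d : seq int),
    P \in unitmx -> Q \in unitmx -> sorted dvdz d ->
    cayley_lapmx v = P *m (\matrix_(i, j) (d`_i *+ (i == j :> nat))) *m Q ->
    #|[set i : 'I_#|{: 'rV['F_2]_r}| | (d`_i != 0) && (2 %| d`_i)%Z]| =
      (2 ^ r.-1 - 1)%N.
Proof.
move=> r_gt0 v_neq0 v_gen sum_neq0 P Q d uP uQ _ defL.
have rankQ := mxrank_intr_smith rat uP uQ defL.
have rankF2 := mxrank_intr_smith 'F_2 uP uQ defL.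
rewrite map_cayley_lapmx // rank_lap_mx in rankQ; last exact: generates_sum_seq.
rewrite map_cayley_lapmx // in rankF2.
rewrite card_even_nonzero -rankQ -rankF2.
have := rank_lap_mx_F2 sum_neq0; move: (\rank _) => k.
have exp2r : (2 ^ r = 2 * 2 ^ r.-1)%N by rewrite -expnS prednK.
by rewrite card_rV_F2 exp2r; lia.
Qed.
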